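(* Let $n\ge 1$ and let $X=\mathrm{P}_n$ be the path graph on $n$ vertices. Then $|\mathrm{Fix}(\mathbf{F}^\uparrow)|=2F_{3n-1}$, where $F_m$ is the $m$-th Fibonacci number ($F_0=0$, $F_1=1$, $F_m=F_{m-1}+F_{m-2}$).
   Context: For a finite simple graph $X$ with vertices $1,\dots,n$, $d(v)$ is the degree of $v$ and $n[v]$ the closed neighborhood of $v$. An extended vertex state is $s_v=(x_v,k_v)\in\{0,1\}\times\{1,\dots,d(v)+1\}$; $\mathcal{S}$ is the product of these sets. Let $\sigma(x[v])=|\{u\in n[v]:x_u=1\}|$. The increasing vertex function maps $(x_v,k_v)$ to $(x_v',k_v')$ with $x_v'=1$ iff $\sigma(x[v])\ge k_v$ (else $0$), and $k_v'=k_v+1$ if $x_v=0$ and $\sigma(x[v])\ge k_v$, else $k_v'=k_v$. $\mathbf{F}^\uparrow:\mathcal{S}\to\mathcal{S}$ applies this vertex function at all vertices simultaneously, and $\mathrm{Fix}(\mathbf{F}^\uparrow)$ is its set of fixed points (equivalently: states with, for every $v$, either $x_v=0$ and $\sigma(x[v])<k_v$, or $x_v=1$ and $\sigma(x[v])\ge k_v$). *)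

From mathcomp Require Import all_boot.
Set Implicit Arguments. Unset Strict Implicit. Unset Printing Implicit Defensive.

Definition simple_graph n (e : rel 'I_n) : Prop :=
  (forall u v, e u v = e v u) /\ (forall v, ~~ e v v).

Definition deg n (e : rel 'I_n) (v : 'I_n) : nat := #|[set u | e v u]|.
Definition cnbhd n (e : rel 'I_n) (v : 'I_n) : {set 'I_n} :=
  [set u | (u == v) || e v u].

(* An (encoded) global state: each vertex carries (x_v, k_v), with k_v stored
   as a natural number in 'I_n.+2 (degrees are < n, so k_v <= d(v)+1 <= n). *)
Definition state n := {ffun 'I_n -> bool * 'I_n.+2}.
Definition xs n (s : state n) (v : 'I_n) : bool := (s v).1.
Definition ks n (s : state n) (v : 'I_n) : nat := (s v).2.

Definition in_S n (e : rel 'I_n) (s : state n) : bool :=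
  [forall v, (1 <= ks s v) && (ks s v <= deg e v + 1)].

Definition sigma n (e : rel 'I_n) (s : state n) (v : 'I_n) : nat :=
  #|[set u in cnbhd e v | xs s u]|.

Definition vfun_up (x : bool) (k sig : nat) : bool * nat :=
  (k <= sig, if ~~ x && (k <= sig) then k.+1 else k).

Definition is_fixed_up n (e : rel 'I_n) (s : state n) : bool :=
  [forall v, vfun_up (xs s v) (ks s v) (sigma e s v) == (xs s v, ks s v)].

Definition Fix_up n (e : rel 'I_n) : {set state n} :=
  [set s | in_S e s && is_fixed_up e s].

Definition path_rel n : rel 'I_n := fun i j => (i.+1 == j :> nat) || (j.+1 == i :> nat).

Fixpoint fib (m : nat) : nat :=
  match m with 0 => 0 | 1 => 1 | (m'.+1 as p).+1 => fib p + fib m' end.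

From mathcomp Require Import all_boot zify.
Set Implicit Arguments. Unset Strict Implicit. Unset Printing Implicit Defensive.

(* At a fixed point with bits x, the admissible thresholds at v are
   1..sigma(x[v]) if x_v = 1 and sigma(x[v])+1..d(v)+1 if x_v = 0; in both
   cases there are as many as closed neighbours of v carrying the bit x_v.
   Hence |Fix| = sum_x prod_v a_v(x), with a_v(x) the number of agreeing closed
   neighbours, which on the path is 1 + [x_(v-1) = x_v] + [x_(v+1) = x_v].
   Summing this product over the words of length m+1 with a given first bit
   gives F(3m+2) or F(3m+3) according as that bit disagrees or agrees with its
   left neighbour: by induction, since F(k+3) = 2F(k+1) + F(k) and
   F(k+4) = 3F(k+1) + 2F(k).  On P_(m+1) the first bit has no left neighbour,
   so each of its two values contributes F(3m+2). *)

Lemma vfun_up_fixE x k sig : (vfun_up x k sig == (x, k)) = (x == (k <= sig)).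
Proof.
rewrite /vfun_up xpair_eqE eq_sym.
by case: x; case: (k <= sig); rewrite //= ?eqxx ?andbT // gtn_eqF.
Qed.

Lemma card_ord_range N a b : a <= b <= N ->
  #|[pred k : 'I_N | a <= k < b]| = b - a.
Proof.
case/andP=> le_ab le_bN.
transitivity (\sum_(a <= k < b) 1); last by rewrite sum_nat_const_nat muln1.
rewrite (big_nat_widen _ _ _ _ _ le_bN) (big_nat_widenl _ _ _ _ _ (leq0n a)).
by rewrite big_mkord -sum1_card; apply: eq_bigl => k; rewrite /= andbC.
Qed.

Lemma card_fst_pred (T U : finType) (c : T) (Q : pred U) :
  #|[pred p : T * U | (p.1 == c) && Q p.2]| = #|Q|.
Proof.
transitivity #|setX [set c] [set u in Q]|.
  by apply: eq_card => -[t u]; rewrite !inE.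
by rewrite cardsX cards1 mul1n cardsE.
Qed.

Lemma card_cnbhd n (e : rel 'I_n) v : ~~ e v v -> #|cnbhd e v| = deg e v + 1.
Proof.
move=> irr_v; have -> : cnbhd e v = v |: [set u | e v u].
  by apply/setP => u; rewrite !inE.
by rewrite cardsU1 inE irr_v addnC.
Qed.

Section FixedPoints.

Variables (n : nat) (e : rel 'I_n).
Hypothesis irr_e : forall v, ~~ e v v.

Definition bits (s : state n) : {ffun 'I_n -> bool} := [ffun v => xs s v].

Definition sigma_bits (x : {ffun 'I_n -> bool}) v : nat :=
  #|[set u in cnbhd e v | x u]|.

Lemma sigma_bitsE s v : sigma e s v = sigma_bits (bits s) v.
Proof. by apply: eq_card => u; rewrite !inE ffunE. Qed.

Lemma card_fixed_thresholds x v b :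
  #|[pred k : 'I_n.+2 | (1 <= k <= deg e v + 1) && (b == (k <= sigma_bits x v))]|
  = #|[set u in cnbhd e v | x u == b]|.
Proof.
set d := deg e v; set s := sigma_bits x v.
have card_nv := card_cnbhd (irr_e v).
have le_s_d : s <= d + 1.
  by rewrite -card_nv subset_leq_card //; apply/subsetP => u; rewrite inE => /andP[].
have le_d_n : d + 1 <= n by rewrite -card_nv -[n in _ <= n]card_ord max_card.
case: b.
  rewrite (@eq_card _ _ [pred k : 'I_n.+2 | 1 <= k < s.+1]); last first.
    by move=> k; rewrite !inE /= eq_sym eqb_id; lia.
  rewrite card_ord_range ?subn1; last lia.
  by apply: eq_card => u; rewrite !inE eqb_id.
rewrite (@eq_card _ _ [pred k : 'I_n.+2 | s.+1 <= k < d.+2]); last first.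
  by move=> k; rewrite !inE /= eq_sym eqbF_neg -ltnNge; lia.
have split_nv : s + #|[set u in cnbhd e v | x u == false]| = d + 1.
  rewrite -card_nv -(cardsID [set u | x u] (cnbhd e v)) /s /sigma_bits; congr (_ + _).
    by apply: eq_card => u; rewrite !inE.
  by apply: eq_card => u; rewrite !inE eqbF_neg andbC.
rewrite card_ord_range; lia.
Qed.

Definition fixed_choices (x : {ffun 'I_n -> bool}) v : pred (bool * 'I_n.+2) :=
  [pred p : bool * 'I_n.+2 | (p.1 == x v) &&
     ((1 <= p.2 <= deg e v + 1) && (x v == (p.2 <= sigma_bits x v)))].

Lemma Fix_up_fibreE x s :
  (s \in Fix_up e) && (bits s == x) = (s \in family (fixed_choices x)).
Proof.
rewrite inE /in_S /is_fixed_up; apply/idP/familyP.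
  case/andP=> /andP[/forallP inS /forallP fixed] /eqP <- v.
  have := fixed v; rewrite vfun_up_fixE sigma_bitsE => fixed_v.
  by rewrite inE /= ffunE -/(xs s v) -/(ks s v) eqxx inS fixed_v.
move=> choice_s.
have bits_s : bits s = x.
  by apply/ffunP => v; rewrite ffunE; have /andP[/eqP] := choice_s v.
rewrite bits_s eqxx andbT; apply/andP; split; apply/forallP => v;
  have /and3P[/eqP x_v range_v fixed_v] := choice_s v => //.
by rewrite vfun_up_fixE sigma_bitsE bits_s /xs x_v.
Qed.

Lemma card_Fix_up :
  #|Fix_up e| = \sum_(x : {ffun 'I_n -> bool}) \prod_v #|[set u in cnbhd e v | x u == x v]|.
Proof.
rewrite -sum1_card (partition_big bits xpredT) //; apply: eq_bigr => x _.
rewrite sum1_card (eq_card (Fix_up_fibreE x)) card_family foldrE big_map big_enum.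
apply: eq_bigr => v _.
by rewrite -card_fixed_thresholds -[RHS](card_fst_pred (x v)).
Qed.

End FixedPoints.

(* [p] is the bit to the left of position 0, [None] when there is none. *)
Definition agree_count (p : option bool) (l : seq bool) (i : nat) : nat :=
  1 + ((if i is j.+1 then Some (nth false l j) else p) == Some (nth false l i))
    + ((i.+1 < size l) && (nth false l i.+1 == nth false l i)).

Definition path_weight (p : option bool) (l : seq bool) : nat :=
  \prod_(i < size l) agree_count p l i.

Lemma path_weight_cons p a t :
  path_weight p (a :: t) = (1 + (p == Some a) + (ohead t == Some a)) * path_weight (Some a) t.
Proof.
rewrite /path_weight /= big_ord_recl; congr (_ * _).
  by rewrite /agree_count /=; case: t.
by apply: eq_bigr => i _; rewrite /agree_count /bump /=; case: (nat_of_ord i).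
Qed.

Lemma big_tupleS (R : Type) (idx : R) (op : Monoid.com_law idx) (T : finType) k
    (F : k.+1.-tuple T -> R) :
  \big[op/idx]_(t : k.+1.-tuple T) F t
    = \big[op/idx]_(a : T) \big[op/idx]_(t : k.-tuple T) F [tuple of a :: t].
Proof.
rewrite pair_big (reindex (fun p : T * k.-tuple T => [tuple of p.1 :: p.2])) //.
exists (fun t => (thead t, [tuple of behead t])) => [[a t] _ | t _].
  by congr (_, _); apply: val_inj.
by rewrite [RHS]tuple_eta.
Qed.

Lemma sum_path_weight_cons m p a :
  \sum_(t : m.-tuple bool) path_weight p (a :: t) = fib (3 * m + 2 + (p == Some a)).
Proof.
elim: m p a => [|m IH] p a.
  pose t0 : 0.-tuple bool := [tuple].
  rewrite (big_pred1 t0) => [|t]; last by apply/esym/eqP; rewrite (tuple0 t) (tuple0 t0).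
  by rewrite path_weight_cons /path_weight big_ord0; case: (p == Some a).
rewrite big_tupleS big_bool [LHS]/=.
under eq_bigr do rewrite path_weight_cons /=.
under [X in _ + X]eq_bigr do rewrite path_weight_cons /=.
rewrite -!big_distrr [LHS]/= !IH.
have -> : 3 * m.+1 + 2 = (3 * m + 2).+3 by lia.
move: (3 * m + 2) => k.
have fibSS j : fib j.+2 = fib j.+1 + fib j by [].
by case: a; case: (p == Some _); rewrite ?addn0 ?addn1 !fibSS; lia.
Qed.

Lemma path_weight_tuple m p (t : m.-tuple bool) :
  path_weight p t = \prod_(i < m) agree_count p t i.
Proof. by rewrite /path_weight size_tuple. Qed.

Lemma big_ffun_tuple (R : Type) (idx : R) (op : Monoid.com_law idx) (T : finType) m
    (G : m.-tuple T -> R) :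
  \big[op/idx]_(x : T ^ m) G (tuple_of_finfun x) = \big[op/idx]_(t : m.-tuple T) G t.
Proof.
rewrite (reindex (@finfun_of_tuple _ _)) /=.
  by apply: eq_bigr => t _; rewrite finfun_of_tupleK.
by exists (@tuple_of_finfun _ _) => ? _; [exact: finfun_of_tupleK | exact: tuple_of_finfunK].
Qed.

Lemma path_rel_irr m (v : 'I_m) : ~~ path_rel v v.
Proof. by rewrite /path_rel orbb (gtn_eqF (ltnSn _)). Qed.

Lemma path_cnbhd_indicator (u v : nat) (P : bool) : (u == v -> P) ->
  (if ((u == v) || ((v.+1 == u) || (u.+1 == v))) && P then 1 else 0)
  = (u == v) + ((u == v.+1) && P) + ((u == v.-1) && ((v != 0) && P)).
Proof.
case: P => [_|]; last by case: (u == v) => [/(_ isT)|_] //; rewrite !andbF.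
by rewrite !andbT; case: ifP; lia.
Qed.

Lemma sum_nat_eq_cond N c (Q : pred nat) :
  \sum_(0 <= k < N) ((k == c) && Q k) = (c < N) && Q c.
Proof.
elim: N => [|N IH]; first by rewrite big_geq.
rewrite big_nat_recr //= IH; case: (N =P c) => [<-|ne_Nc].
  by rewrite ltnn ltnSn.
by rewrite addn0 ltnS [c <= N]leq_eqVlt (eq_sym c); move/eqP/negPf: ne_Nc => ->.
Qed.

Lemma card_path_cnbhd_agree m (x : {ffun 'I_m -> bool}) (v : 'I_m) :
  #|[set u in cnbhd (@path_rel m) v | x u == x v]|
  = agree_count None (tuple_of_finfun x) v.
Proof.
set l : seq bool := tuple_of_finfun x.
have x_nth u : x u = nth false l u by rewrite -tnth_nth tnth_mktuple.
set Q := fun k => nth false l k == nth false l v.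
rewrite -sum1dep_card big_mkcond /=.
under eq_bigr => u _.
  rewrite inE /path_rel !x_nth -/(Q u) path_cnbhd_indicator => [|/eqP ->]; last by rewrite /Q.
  over.
rewrite /= -(big_mkord xpredT (fun u => (u == v) + ((u == v.+1) && Q u)
  + ((u == v.-1) && ((v != 0 :> nat) && Q u)))) !big_split /=.
under eq_big_nat => i _ do rewrite -[i == nat_of_ord v]andbT.
rewrite !sum_nat_eq_cond ltn_ord /agree_count size_tuple {}/Q.
case: v => [[|v] lt_v_m] /=; first by rewrite andbF /= !addn0.
by rewrite (ltnW lt_v_m) /= addnAC.
Qed.

Theorem proposition4p3 (n : nat) : 1 <= n ->
  #|Fix_up (@path_rel n)| = 2 * fib (3 * n - 1).
Proof.
case: n => [//|m] _.
rewrite (card_Fix_up (@path_rel_irr m.+1)).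
under eq_bigr => x _ do under eq_bigr => v _ do rewrite card_path_cnbhd_agree.
under eq_bigr => x _ do rewrite -path_weight_tuple.
rewrite (big_ffun_tuple _ (path_weight None)) big_tupleS big_bool [LHS]/=.
rewrite !sum_path_weight_cons /= addn0.
have -> : 3 * m.+1 - 1 = 3 * m + 2 by lia.
by rewrite mul2n -addnn.
Qed.
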